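(* Let $G_1, G_2$ be two graphs on the same vertex set $V$. Let $A \subseteq S(G_1) \cap S(G_2)$ and $B\subseteq V$ be such that $N_{G_1}(B) \cup N_{G_2}(B) \subseteq A$. Suppose $E(G_1) \triangle E(G_2) \subseteq \binom{A \cup B}{2}$. Then \[ S(G_1) \setminus B = S(G_2)\setminus B,\quad P(G_1) \setminus B = P(G_2) \setminus B,\quad R(G_1) \setminus B = R(G_2) \setminus B. \] Moreover, for any vertex $w \in V \setminus B$, we have $C_w(G_1) = C_w(G_2) \subseteq V \setminus (A \cup B)$, $G_1[C_w(G_1)] = G_2[C_w(G_2)]$, and $R(G_1) \cap C_w(G_1) = R(G_2) \cap C_w(G_2)$.
   Context: For a graph $G$ and $X\subseteq V(G)$, $N_G(X)=\{x\in V(G)\setminus X: xy\in E(G)\text{ for some }y\in X\}$ and $N_G(x)=N_G(\{x\})$. The strong $4$-core $S(G)$ is the maximal $X\subseteq V(G)$ with $|N_G(x)\cap X|\ge4$ for all $x\in X\cup N_G(X)$; $P(G)=N_G(S(G))$ and $R(G)=V(G)\setminus(S(G)\cup P(G))$. For $w\in P(G)\cup R(G)$, $C_w(G)$ is the vertex set of the connected component of $G[P(G)\cup R(G)]$ containing $w$; for $w\in S(G)$, $C_w(G)=\varnothing$. $\triangle$ denotes symmetric difference. *)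

From mathcomp Require Import all_boot.
Set Implicit Arguments. Unset Strict Implicit. Unset Printing Implicit Defensive.

(* A (simple) graph on the finite vertex set T is given by its adjacency
   relation e : rel T (assumed symmetric and irreflexive in the theorem). *)
Section Core.
Variables (T : finType) (e : rel T).

Definition nbhd (X : {set T}) : {set T} :=
  [set x | (x \notin X) && [exists y in X, e x y]].

Definition strong4 (X : {set T}) : bool :=
  [forall x in X :|: nbhd X, 4 <= #|nbhd [set x] :&: X|].

(* S(G): the maximal such X. The family of such sets contains set0 and is
   closed under union, so the maximal set is the union of all of them. *)
Definition score : {set T} := \bigcup_(X : {set T} | strong4 X) X.
Definition pset : {set T} := nbhd score.
Definition rset : {set T} := ~: (score :|: pset).

Definition restr_rel : rel T :=
  [rel x y | [&& e x y, x \in pset :|: rset & y \in pset :|: rset]].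

Definition compw (w : T) : {set T} :=
  if w \in pset :|: rset then [set v | connect restr_rel w v] else set0.
End Core.

From mathcomp Require Import all_boot.
Set Implicit Arguments. Unset Strict Implicit. Unset Printing Implicit Defensive.

(* Strong-4 sets are closed under union, so S(G) is the largest of them.
   Outside A :|: B the graphs G1 and G2 have the same edges, and no vertex
   outside A :|: B is adjacent to B.  So every vertex that needs to be checked
   for (S(G1) :\: B) :|: S(G2) to be a strong-4 set of G2 either is checked
   by S(G2) already or lies outside A :|: B, where its G1-neighbours in S(G1)
   are G2-neighbours outside B; hence S(G1) :\: B lies in S(G2), and P and R
   follow.  A component of G[P :|: R] through w \notin B enters neither A,
   which lies in the core, nor B, whose neighbours lie in A; so it only sees
   edges on which G1 and G2 agree. *)

Lemma connect_sub_in (T : finType) (e e' : rel T) (D : {pred T}) x y :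
    (forall u v, u \in D -> e u v -> (v \in D) && e' u v) ->
  x \in D -> connect e x y -> (y \in D) && connect e' x y.
Proof.
move=> closedD xD /connectP [p ep ->] {y}.
elim: p x xD ep => [|z p IHp] x xD /=; first by rewrite xD connect0.
case/andP=> exz ezp; case/andP: (closedD x z xD exz) => zD e'xz.
case/andP: (IHp z zD ezp) => -> e'zp.
exact: connect_trans (connect1 e'xz) e'zp.
Qed.

Lemma setD_eq_mem (T : finType) (X Y B : {set T}) x :
  X :\: B = Y :\: B -> x \notin B -> (x \in X) = (x \in Y).
Proof. by move=> /setP /(_ x); rewrite !inE => + /negPf xB; rewrite xB. Qed.

Section StrongCore.
Variables (T : finType) (e : rel T).
Implicit Types (X Y : {set T}) (x y z : T).

Lemma in_nbhd X x : (x \in nbhd e X) = (x \notin X) && [exists y in X, e x y].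
Proof. by rewrite inE. Qed.

Lemma in_nbhd1 x z : (z \in nbhd e [set x]) = (z != x) && e z x.
Proof.
rewrite in_nbhd in_set1; congr (_ && _).
by apply/exists_inP/idP => [[y /set1P -> //] | ezx]; exists x; rewrite ?in_set1.
Qed.

Lemma edge_mem_nbhd X Y x y :
  nbhd e X \subset Y -> e x y -> y \in X -> x \in Y :|: X.
Proof.
move=> sNXY exy yX; rewrite in_setU orbC; have [//|xX] := boolP (x \in X).
by apply: (subsetP sNXY); rewrite in_nbhd xX; apply/exists_inP; exists y.
Qed.

Lemma setU_nbhdS X Y : X \subset Y -> X :|: nbhd e X \subset Y :|: nbhd e Y.
Proof.
move=> sXY; apply/subsetP => x; rewrite !in_setU !in_nbhd.
case/orP => [/(subsetP sXY) -> // | /andP [_ /exists_inP [y yX exy]]].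
have [//|_ /=] := boolP (x \in Y).
by apply/exists_inP; exists y; first exact: (subsetP sXY).
Qed.

Lemma setU_nbhdU X Y :
  (X :|: Y) :|: nbhd e (X :|: Y) \subset (X :|: nbhd e X) :|: (Y :|: nbhd e Y).
Proof.
apply/subsetP => x; rewrite !in_setU !in_nbhd in_setU negb_or.
case: (x \in X); case: (x \in Y); rewrite /= ?orbT //.
case/exists_inP => y /setUP [yX | yY] exy.
  by apply/orP; left; apply/exists_inP; exists y.
by apply/orP; right; apply/exists_inP; exists y.
Qed.

Lemma strong4U X Y : strong4 e X -> strong4 e Y -> strong4 e (X :|: Y).
Proof.
move=> /forall_inP s4X /forall_inP s4Y.
apply/forall_inP => x /(subsetP (setU_nbhdU X Y)) /setUP [/s4X | /s4Y] /leq_trans;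
  by apply; apply/subset_leq_card/setIS; rewrite ?subsetUl ?subsetUr.
Qed.

Lemma strong4_sub_score X : strong4 e X -> X \subset score e.
Proof. exact: bigcup_sup. Qed.

Lemma strong4_score : strong4 e (score e).
Proof.
apply: (big_ind (strong4 e)) => //; last exact: strong4U.
apply/forall_inP => x; rewrite set0U in_nbhd => /andP [_ /exists_inP [y]].
by rewrite inE.
Qed.

Lemma score_nbhd1_ge4 x :
  x \in score e :|: nbhd e (score e) -> 4 <= #|nbhd e [set x] :&: score e|.
Proof. exact: (forall_inP strong4_score). Qed.

Lemma in_psetUrset x : (x \in pset e :|: rset e) = (x \notin score e).
Proof. by rewrite /rset /pset !inE; case: (x \in score e); case: [exists _ in _, _]. Qed.

End StrongCore.

Lemma eq_in_nbhd (T : finType) (e e' : rel T) (X : {set T}) x :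
  e x =1 e' x -> (x \in nbhd e X) = (x \in nbhd e' X).
Proof. by move=> ee'; rewrite !in_nbhd; congr (_ && _); apply: eq_existsb_in. Qed.

Section Transfer.
Variables (T : finType) (e1 e2 : rel T) (A B : {set T}).
Hypotheses (sym1 : symmetric e1) (sym2 : symmetric e2).
Hypotheses (A_sub_score1 : A \subset score e1) (A_sub_score2 : A \subset score e2).
Hypotheses (nbhdB_sub1 : nbhd e1 B \subset A) (nbhdB_sub2 : nbhd e2 B \subset A).
Hypothesis agree : forall x y, x \notin A :|: B -> e1 x y = e2 x y.

Lemma adj_notin_B x y : x \notin A :|: B -> e1 x y -> y \notin B.
Proof. by move=> xAB exy; apply: contra xAB; apply: edge_mem_nbhd nbhdB_sub1 exy. Qed.

Lemma nbhd1_score_sub x : x \notin A :|: B ->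
  nbhd e1 [set x] :&: score e1 \subset nbhd e2 [set x] :&: (score e1 :\: B).
Proof.
move=> xAB; apply/subsetP => z; rewrite !in_setI in_setD !in_nbhd1.
case/andP=> /andP [zx ezx] zS1.
rewrite zx zS1 sym2 -agree // sym1 ezx /= andbT.
by apply: (adj_notin_B xAB); rewrite sym1.
Qed.

Lemma score_setD_sub : score e1 :\: B \subset score e2 :\: B.
Proof.
set S1 := score e1; set S2 := score e2.
suff /strong4_sub_score sub2 : strong4 e2 ((S1 :\: B) :|: S2).
  apply/subsetP => x xS1B; rewrite in_setD (subsetP sub2) ?andbT.
    by case/setDP: xS1B.
  by rewrite in_setU xS1B.
apply/forall_inP => x xY.
have [xS2N | xS2N'] := boolP (x \in S2 :|: nbhd e2 S2).
  apply: leq_trans (score_nbhd1_ge4 xS2N) _.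
  by apply/subset_leq_card/setIS/subsetUr.
have xS2 : x \notin S2 by apply: contra xS2N'; rewrite in_setU => ->.
have noS2 y : y \in S2 -> ~~ e2 x y.
  move=> yS2; apply: contra xS2N' => exy.
  by rewrite in_setU in_nbhd xS2; apply/orP; right; apply/exists_inP; exists y.
have xN : x \in (S1 :\: B) :|: nbhd e2 (S1 :\: B).
  by move: (subsetP (setU_nbhdU e2 _ _) x xY); rewrite in_setU (negPf xS2N') orbF.
have xA : x \notin A by apply: contra xS2; apply: subsetP.
have xB : x \notin B.
  apply/negP => xB; move: xN; rewrite in_setU in_setD xB /= in_nbhd.
  case/andP=> _ /exists_inP [y /setDP [yS1 yB] exy].
  have : y \in A :|: B by apply: edge_mem_nbhd nbhdB_sub2 _ xB; rewrite sym2.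
  rewrite in_setU (negPf yB) orbF => /(subsetP A_sub_score2) yS2.
  by move: (noS2 y yS2); rewrite exy.
have xAB : x \notin A :|: B by rewrite in_setU negb_or xA.
have xS1N : x \in S1 :|: nbhd e1 S1.
  apply: (subsetP (setU_nbhdS e1 (subsetDl S1 B))).
  have e12x : e1 x =1 e2 x by move=> y; apply: agree.
  by rewrite in_setU (eq_in_nbhd _ e12x) -in_setU.
apply: leq_trans (score_nbhd1_ge4 xS1N) _.
apply: leq_trans (subset_leq_card (nbhd1_score_sub xAB)) _.
by apply/subset_leq_card/setIS/subsetUl.
Qed.

Hypothesis score_agree : score e1 :\: B = score e2 :\: B.

Lemma pset_setD_sub : pset e1 :\: B \subset pset e2 :\: B.
Proof.
apply/subsetP => x /setDP [xP1 xB]; rewrite in_setD xB /=.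
move: xP1; rewrite /pset !in_nbhd -(setD_eq_mem score_agree xB).
case/andP=> xS1 /exists_inP [y yS1 exy]; rewrite xS1 /=.
have xAB : x \notin A :|: B.
  by rewrite in_setU (negPf xB) orbF; apply: contra xS1; apply: subsetP.
apply/exists_inP; exists y; last by rewrite -agree.
by rewrite -(setD_eq_mem score_agree (adj_notin_B xAB exy)).
Qed.

Lemma restr_rel_transfer x y :
    x \in ~: (A :|: B :|: score e1) -> restr_rel e1 x y ->
  (y \in ~: (A :|: B :|: score e1)) && restr_rel e2 x y.
Proof.
rewrite !in_setC in_setU negb_or => /andP [xAB xS1].
rewrite /restr_rel /= !in_psetUrset => /and3P [exy _ yS1].
have yB := adj_notin_B xAB exy.
have yA : y \notin A by apply: contra yS1; apply: subsetP.
rewrite !in_setU (negPf yA) (negPf yB) (negPf yS1) -agree // exy.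
have xB : x \notin B by apply: contra xAB; rewrite in_setU orbC => ->.
by rewrite -!(setD_eq_mem score_agree) // xS1 yS1.
Qed.

Lemma compw_sub w : w \notin B ->
  compw e1 w \subset ~: (A :|: B :|: score e1) :&: compw e2 w.
Proof.
move=> wB; rewrite /compw !in_psetUrset -(setD_eq_mem score_agree wB).
have [wS1 | wS1] := boolP (w \in score e1); first exact: sub0set.
have wD : w \in ~: (A :|: B :|: score e1).
  rewrite in_setC !in_setU (negPf wB) (negPf wS1) !orbF.
  by apply: contra wS1; apply: subsetP.
apply/subsetP => v; rewrite in_set => /(connect_sub_in restr_rel_transfer wD).
by case/andP=> vD wv; rewrite in_setI vD in_set.
Qed.

End Transfer.

Section LocalChange.
Variables (T : finType) (e1 e2 : rel T) (A B : {set T}).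
Hypotheses (sym1 : symmetric e1) (sym2 : symmetric e2).
Hypothesis A_sub_score : A \subset score e1 :&: score e2.
Hypothesis nbhdB_sub : nbhd e1 B :|: nbhd e2 B \subset A.
Hypothesis edge_diff_AB :
  forall x y, e1 x y != e2 x y -> (x \in A :|: B) && (y \in A :|: B).

Let A_sub_score1 : A \subset score e1. Proof. by case/subsetIP: A_sub_score. Qed.
Let A_sub_score2 : A \subset score e2. Proof. by case/subsetIP: A_sub_score. Qed.
Let nbhdB_sub1 : nbhd e1 B \subset A. Proof. by case/subUsetP: nbhdB_sub. Qed.
Let nbhdB_sub2 : nbhd e2 B \subset A. Proof. by case/subUsetP: nbhdB_sub. Qed.

Let agree x y : x \notin A :|: B -> e1 x y = e2 x y.
Proof. by move=> xAB; apply/eqP; apply: contraNT xAB => /edge_diff_AB /andP []. Qed.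

Let agree21 x y : x \notin A :|: B -> e2 x y = e1 x y.
Proof. by move=> xAB; rewrite agree. Qed.

Lemma score_setD_eq : score e1 :\: B = score e2 :\: B.
Proof.
apply/eqP; rewrite eqEsubset.
rewrite (score_setD_sub sym1 sym2 A_sub_score2 nbhdB_sub1 nbhdB_sub2 agree).
by rewrite (score_setD_sub sym2 sym1 A_sub_score1 nbhdB_sub2 nbhdB_sub1 agree21).
Qed.

Let score_agree21 : score e2 :\: B = score e1 :\: B.
Proof. by rewrite score_setD_eq. Qed.

Lemma pset_setD_eq : pset e1 :\: B = pset e2 :\: B.
Proof.
apply/eqP; rewrite eqEsubset.
rewrite (pset_setD_sub A_sub_score1 nbhdB_sub1 agree score_setD_eq).
by rewrite (pset_setD_sub A_sub_score2 nbhdB_sub2 agree21 score_agree21).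
Qed.

Lemma rset_setD_eq : rset e1 :\: B = rset e2 :\: B.
Proof.
apply/setP => x; rewrite !in_setD; have [//|xB] := boolP (x \in B).
by rewrite /rset !in_setC !in_setU (setD_eq_mem score_setD_eq xB)
  (setD_eq_mem pset_setD_eq xB).
Qed.

Lemma compw_eq w : w \notin B -> compw e1 w = compw e2 w.
Proof.
move=> wB; apply/eqP; rewrite eqEsubset.
have /subsetIP [_ ->] := compw_sub A_sub_score1 nbhdB_sub1 agree score_setD_eq wB.
by have /subsetIP [_ ->] := compw_sub A_sub_score2 nbhdB_sub2 agree21 score_agree21 wB.
Qed.

Lemma compw_subC w : w \notin B -> compw e1 w \subset ~: (A :|: B).
Proof.
move=> wB; have /subsetIP [sub_D _] :=
  compw_sub A_sub_score1 nbhdB_sub1 agree score_setD_eq wB.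
by apply: subset_trans sub_D _; rewrite setCS subsetUl.
Qed.

Lemma compw_edge_eq w x y :
  w \notin B -> x \in compw e1 w -> e1 x y = e2 x y.
Proof. by move=> /compw_subC /subsetP sub_AB /sub_AB; rewrite in_setC; apply: agree. Qed.

Lemma rset_compw_eq w : w \notin B ->
  rset e1 :&: compw e1 w = rset e2 :&: compw e2 w.
Proof.
move=> wB; rewrite -compw_eq //; apply/setP => z; rewrite !in_setI.
have [zC | _] := boolP (z \in compw e1 w); last by rewrite !andbF.
have zB : z \notin B.
  by move: (subsetP (compw_subC wB) z zC); rewrite in_setC in_setU negb_or => /andP [].
by rewrite (setD_eq_mem rset_setD_eq zB).
Qed.

End LocalChange.

Theorem lemma4p5 (T : finType) (e1 e2 : rel T)
  (sym1 : symmetric e1) (irr1 : irreflexive e1)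
  (sym2 : symmetric e2) (irr2 : irreflexive e2)
  (A B : {set T})
  (hA : A \subset score e1 :&: score e2)
  (hB : nbhd e1 B :|: nbhd e2 B \subset A)
  (hE : forall x y, e1 x y != e2 x y -> (x \in A :|: B) && (y \in A :|: B)) :
  [/\ score e1 :\: B = score e2 :\: B,
      pset e1 :\: B = pset e2 :\: B,
      rset e1 :\: B = rset e2 :\: B &
      forall w, w \notin B ->
        [/\ compw e1 w = compw e2 w,
            compw e1 w \subset ~: (A :|: B),
            (forall x y, x \in compw e1 w -> y \in compw e1 w -> e1 x y = e2 x y) &
            rset e1 :&: compw e1 w = rset e2 :&: compw e2 w]].
Proof.
split; [exact: score_setD_eq sym1 sym2 hA hB hE |
  exact: pset_setD_eq sym1 sym2 hA hB hE | exact: rset_setD_eq sym1 sym2 hA hB hE |].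
move=> w wB; split.
- exact: compw_eq sym1 sym2 hA hB hE w wB.
- exact: compw_subC sym1 sym2 hA hB hE w wB.
- by move=> x y xC _; apply: compw_edge_eq sym1 sym2 hA hB hE w x y wB xC.
- exact: rset_compw_eq sym1 sym2 hA hB hE w wB.
Qed.
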